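(* Consider the oceanic model with threshold $h$ under the Shapley scheme. Let $\Pi$ be a partition of all players into winning pools such that every atomic player $i$ is in a pool whose other members are non-atomic players of total mass $k_i$ with $0<k_i\le h$ and $a_i+k_i\ge h$, all remaining non-atomic players are in pools containing no atomic player, each of total mass exactly $l\ge h$ (at least one such pool), and for all distinct atomic players $i,j$: \[\frac{h-a_i}{k_i^2}=\frac{1}{l},\qquad \frac{k_i+a_i-h}{k_i}\ge\frac{a_i}{l},\qquad \frac{k_i+a_i-h}{k_i}\ge\frac{(h-a_j)^2-(\max(0,h-a_i-a_j))^2+(\max(0,a_i-h+k_j))^2}{2k_j^2}.\] Then the Shapley scheme is Sybil-proof with respect to $\Pi$: no atomic player can obtain a strictly larger total payoff by a Sybil strategy than her payoff under $\Pi$.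
   Context: Oceanic model: finitely many atomic players, player $i$ with stake $a_i>0$, and a continuum of non-atomic players (a measurable set of them contributes stake equal to its measure); threshold $h>0$ with $a_i<h$ for all atomic $i$. Pools partition all players; a pool $S$ has stake $m(S)$ (non-atomic mass plus atomic stakes) and reward $\rho(S)=1$ if $m(S)\ge h$ (winning), else $0$. Shapley scheme (oceanic): in a pool $S$ with non-atomic mass $k>0$ and atomic members with stakes $b_1,\dots,b_t$, let $L_1,\dots,L_t$ be i.i.d. uniform on $[0,k]$ and $P(i)=\{j\ne i: L_j<L_i\}$; atomic member $i$ receives $\Pr\big[\sum_{j\in P(i)}b_j+L_i<h\le\sum_{j\in P(i)}b_j+L_i+b_i\big]$; the remainder is shared equally per unit of stake among non-atomic members. Sybil strategy: given a partition $\Pi$, an atomic player $i$ with stake $a_i$ splits her stake into nonnegative amounts $s_{1},\dots,s_{t}$ with $\sum_j s_j=a_i$ and joins $t$ distinct pools among those of $\Pi$ (her own original pool being taken without her), contributing $s_j$ to the $j$-th of them as a separate atomic identity of stake $s_j$; all other players stay put. Her payoff is the sum of the payments her identities receive in these pools. A scheme is Sybil-proof with respect to $\Pi$ if no atomic player becomes strictly better off (relative to her payoff under $\Pi$) by switching to a Sybil strategy. *)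

From HB Require Import structures.
From mathcomp Require Import all_boot all_order all_algebra.
From mathcomp Require Import all_classical all_reals all_analysis.
Set Implicit Arguments. Unset Strict Implicit. Unset Printing Implicit Defensive.
Import Order.TTheory GRing.Theory Num.Theory.
Import numFieldNormedType.Exports.
Local Open Scope classical_set_scope.
Local Open Scope ring_scope.

Section Oceanic.
Variable R : realType.

(* Iterated Lebesgue integral of g over the box [0,k]^t, the coordinates
   being L 0, ..., L (t-1) (coordinates >= t are fixed to 0). *)
Fixpoint box_integral (k : R) (t : nat) (g : (nat -> R) -> \bar R) : \bar R :=
  match t with
  | 0 => g (fun _ => 0)
  | t'.+1 =>
      let I : set R := `[0%R, k]%classic in
      (\int[@lebesgue_measure R]_(x in I)
          box_integral k t' (fun L => g (fun j => if j == t' then x else L j)))%E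
  end.

(* Probability, for L_0,...,L_(t-1) i.i.d. uniform on [0,k], of the event E:
   (1/k^t) * integral over [0,k]^t of the indicator of E. *)
Definition unif_prob (k : R) (t : nat) (E : (nat -> R) -> bool) : R :=
  fine (box_integral k t (fun L => ((E L)%:R)%:E)) / k ^+ t.

Definition pool_stake (k : R) (bs : seq R) : R := k + \sum_(b <- bs) b.

(* Shapley payment to the atomic member number i (stake bs`_i) of a pool with
   non-atomic mass k and atomic members of stakes bs, threshold h.
   P(i) = {j <> i : L_j < L_i}; the payment is
   Pr[ sum_{P(i)} b_j + L_i < h <= sum_{P(i)} b_j + L_i + b_i ]
   if the pool is winning (reward 1), and 0 otherwise (reward 0). *)
Definition shapley_pay (h k : R) (bs : seq R) (i : nat) : R :=
  if h <= pool_stake k bs then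
    unif_prob k (size bs) (fun L =>
      let pre := \sum_(j < size bs | (j != i :> nat) && (L j < L i)) bs`_j in
      (pre + L i < h) && (h <= pre + L i + bs`_i))
  else 0.

(* The partition Pi of the theorem: pools are indexed by 'I_n + 'I_m;
   pool inl j = atomic player j together with non-atomic mass k j,
   pool inr q = a pool of non-atomic players only, of mass l. *)
Definition payoff_Pi (h : R) (n : nat) (a k : 'I_n -> R) (i : 'I_n) : R :=
  shapley_pay h (k i) [:: a i] 0.

(* Sybil strategy of player i: she joins the (distinct) pools in J (pools of Pi,
   her own pool taken without her), contributing stake s p to pool p \in J as
   a separate atomic identity; everybody else stays put. *)
Definition sybil_payoff (h l : R) (n m : nat) (a k : 'I_n -> R) (i : 'I_n)
    (J : {set 'I_n + 'I_m}) (s : 'I_n + 'I_m -> R) : R :=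
  \sum_(p in J)
    match p with
    | inl j => if j == i then shapley_pay h (k i) [:: s p] 0
               else shapley_pay h (k j) [:: a j; s p] 1
    | inr _ => shapley_pay h l [:: s p] 0
    end.

End Oceanic.

(* Let P = (k_i + a_i - h) / k_i.  Under Pi the arrival time of player i in her
   pool is uniform on [0, k_i] and she is pivotal iff it is at least h - a_i, so
   she earns P.  As the stakes of her identities add up to a_i, it suffices that
   an identity of stake x <= a_i earns at most (P / a_i) x wherever it goes:
   - in a pool of non-atomic mass l it is pivotal only if it arrives in
     [h - x, h[, so it earns at most x / l <= (P / a_i) x by the second condition;
   - in her own pool it earns at most max(0, x - h + k_i) / k_i, convex in x,
     zero at 0 and equal to P at a_i;
   - in the pool of another atomic player j, integrating over both arrival times
     bounds its payment by [pair_share].  As a function of x this is at most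
     (h - a_j) x / k_j^2 = x / l until x reaches max(h - a_j, h - k_j), and a
     convex quadratic afterwards; the third condition bounds it at x = a_i. *)

From HB Require Import structures.
From mathcomp Require Import all_boot all_order all_algebra.
From mathcomp Require Import all_classical all_reals all_analysis.
From mathcomp Require Import ring lra.
Import Order.TTheory GRing.Theory Num.Theory.
Import numFieldNormedType.Exports.
Set Implicit Arguments. Unset Strict Implicit.
Local Open Scope ring_scope.

Section PayoffAlgebra.
Variable R : realFieldType.

(* The left-hand side of the third condition, with s for a_i. *)
Definition pair_share (h K b s : R) : R :=
  ((h - b) ^+ 2 - Num.max 0 (h - s - b) ^+ 2 + Num.max 0 (s - h + K) ^+ 2)
    / (2 * K ^+ 2).

Lemma max0_sub_le_chord (d a x : R) : 0 <= d -> d <= a -> 0 <= x <= a ->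
  Num.max 0 (x - d) <= (a - d) / a * x.
Proof.
move=> d0 da /andP[x0 xa].
have [a_eq0|a_neq0] := eqVneq a 0.
  have -> : x = 0 by apply/le_anti; rewrite x0 -a_eq0 xa.
  by rewrite mulr0 max_l //; lra.
have a0 : 0 < a by rewrite lt_def a_neq0 (le_trans d0 da).
rewrite ge_max; apply/andP; split.
  by rewrite mulr_ge0 // divr_ge0 ?subr_ge0 // ltW.
rewrite mulrAC ler_pdivlMr //; nra.
Qed.

Lemma monic_quadratic_le0_between (p r w y z : R) : w <= y <= z ->
  w ^+ 2 + p * w + r <= 0 -> z ^+ 2 + p * z + r <= 0 -> y ^+ 2 + p * y + r <= 0.
Proof.
move=> /andP[wy yz] qw qz.
have [wz|z_neq_w] := eqVneq z w; first by rewrite (@le_anti _ _ y w) ?wy // -wz yz.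
have zw : 0 < z - w by rewrite subr_gt0 lt_def z_neq_w (le_trans wy yz).
have chord : (z - w) * (y ^+ 2 + p * y + r) <= 0.
  have : 0 <= (z - y) * (y - w) * (z - w) by rewrite !mulr_ge0 //; lra.
  nra.
by rewrite -(pmulr_rle0 _ zw).
Qed.

(* Below max u v the left-hand side is at most 2 u y; above, it is a monic
   quadratic in y, which stays below the line C y between two points where it
   lies below it. *)
Lemma quadratic_gain_le_linear (u v C x a : R) : 0 <= u -> 0 <= v -> 2 * u <= C ->
  0 <= x <= a ->
  u ^+ 2 - Num.max 0 (u - a) ^+ 2 + Num.max 0 (a - v) ^+ 2 <= C * a ->
  u ^+ 2 - Num.max 0 (u - x) ^+ 2 + Num.max 0 (x - v) ^+ 2 <= C * x.
Proof.
move=> u0 v0 uC /andP[x0 xa] Fa.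
have low y : 0 <= y -> (y <= u) || (y <= v) ->
    u ^+ 2 - Num.max 0 (u - y) ^+ 2 + Num.max 0 (y - v) ^+ 2 <= C * y.
  move=> y0 yuv; have : 2 * u * y <= C * y by apply: ler_wpM2r.
  by case: (leP (u - y) 0) => uy; case: (leP (y - v) 0) => yv; case/orP: yuv; nra.
have [xuv|] := boolP ((x <= u) || (x <= v)); first exact: low.
rewrite negb_or -!ltNge => /andP[ux vx].
pose w := Num.max u v.
have [uw vw] : u <= w /\ v <= w by rewrite le_max lexx le_max lexx orbT.
have wx : w <= x by rewrite ge_max !ltW.
have wuv : (w <= u) || (w <= v) by rewrite /w; case: (leP u v); rewrite lexx ?orbT.
have Fw := low w (le_trans u0 uw) wuv.
have high y : w <= y ->
    u ^+ 2 - Num.max 0 (u - y) ^+ 2 + Num.max 0 (y - v) ^+ 2 = u ^+ 2 + (y - v) ^+ 2.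
  by move=> wy; rewrite max_l ?max_r; [ring|lra|lra].
rewrite high // in Fw; rewrite high //.
rewrite high in Fa; last exact: le_trans wx xa.
have q y : (y ^+ 2 + - (2 * v + C) * y + (u ^+ 2 + v ^+ 2) <= 0)
    = (u ^+ 2 + (y - v) ^+ 2 <= C * y).
  by rewrite -[in RHS]subr_le0; congr (_ <= _); ring.
have := @monic_quadratic_le0_between (- (2 * v + C)) (u ^+ 2 + v ^+ 2) w x a.
by rewrite !q wx xa => /(_ isT Fw Fa).
Qed.

Lemma pair_share_le_linear (h K b c x a : R) : 0 < K -> K <= h -> b <= h ->
  (h - b) / K ^+ 2 <= c -> 0 <= x <= a -> pair_share h K b a <= c * a ->
  pair_share h K b x <= c * x.
Proof.
move=> K0 Kh bh bc xa Fa.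
have K2 : 0 < 2 * K ^+ 2 by rewrite mulr_gt0 ?exprn_gt0.
have shift y : pair_share h K b y * (2 * K ^+ 2) =
    (h - b) ^+ 2 - Num.max 0 (h - b - y) ^+ 2 + Num.max 0 (y - (h - K)) ^+ 2.
  by rewrite /pair_share divfK ?gt_eqF // !opprB !addrA (addrAC h) (addrAC y).
rewrite -(ler_pM2r K2) shift mulrAC; rewrite -(ler_pM2r K2) shift mulrAC in Fa.
apply: quadratic_gain_le_linear Fa; rewrite ?subr_ge0 //.
have : h - b <= c * K ^+ 2 by rewrite -ler_pdivrMr ?exprn_gt0.
lra.
Qed.

End PayoffAlgebra.

Section Integrals.
Local Open Scope classical_set_scope.
Variable R : realType.
Local Notation mu := (@lebesgue_measure R).

Lemma fine_le_EFin (e : \bar R) (M : R) : (0 <= e)%E -> (e <= M%:E)%E -> fine e <= M.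
Proof. by case: e => [r| |] //=; rewrite ?lee_fin // leey_eq. Qed.

Lemma EFin_le_fine (e : \bar R) (r M : R) : (r%:E <= e)%E -> (e <= M%:E)%E -> r <= fine e.
Proof. by case: e => [x| |] //=; rewrite ?lee_fin // leNye. Qed.

(* No measurability is needed: both integrals are suprema over nonnegative
   simple functions below the integrand. *)
Lemma ge0_le_integral_patch (D1 D2 : set R) (f g : R -> \bar R) :
  (forall x, (0 <= (f \_ D1) x)%E) -> (forall x, ((f \_ D1) x <= (g \_ D2) x)%E) ->
  (\int[mu]_(x in D1) f x <= \int[mu]_(x in D2) g x)%E.
Proof.
move=> f0 fg.
have g0 x : (0 <= (g \_ D2) x)%E by exact: le_trans (f0 x) (fg x).
rewrite integral_mkcond [X in (_ <= X)%E]integral_mkcond.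
rewrite ge0_integralE; last by move=> x _; exact: f0.
rewrite [X in (_ <= X)%E]ge0_integralE; last by move=> x _; exact: g0.
rewrite !patch_setT; apply: ereal_sup_le => _ [f' f'f <-]; exists f' => //= x.
exact: le_trans (f'f x) (fg x).
Qed.

Lemma integral1_itv (b1 b2 : bool) (al be : R) : al <= be ->
  (\int[mu]_(x in [set` Interval (BSide b1 al) (BSide b2 be)]) 1 = (be - al)%:E)%E.
Proof.
rewrite le_eqVlt => /predU1P[<-|ab]; rewrite integral_cst //= mul1e lebesgue_measure_itv /= lte_fin.
  by rewrite ltxx subrr.
by rewrite ab EFinB.
Qed.

Lemma integral_itv_affine (c d al be : R) : al <= be ->
  (\int[mu]_(x in `[al, be]) (c * x + d)%:E = (c * (be ^+ 2 - al ^+ 2) / 2 + d * (be - al))%:E)%E.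
Proof.
rewrite le_eqVlt => /predU1P[<-|ab].
  by rewrite set_itv1 integral_set1 !subrr !mulr0 !mul0r addr0.
pose P : {poly R} := (c / 2) *: 'X^2 + d *: 'X.
have PE x : P.[x] = c * x ^+ 2 / 2 + d * x by rewrite /P !hornerE /=; lra.
have P'E x : (P^`()).[x] = c * x + d.
  by rewrite /P derivD !derivZ derivX derivXn /= !hornerE /=; lra.
rewrite (@continuous_FTC2 R (fun x => c * x + d) (horner P) al be ab).
- by rewrite !PE -EFinB; congr (_%:E); lra.
- have -> : (fun x => c * x + d) = horner (c *: 'X + d%:P).
    by apply/funext => x; rewrite !hornerE.
  by apply: continuous_subspaceT => x; apply: continuous_horner.
- split.
  + by move=> x _; exact: derivable_horner.
  + by apply: cvg_at_right_filter; apply: continuous_horner.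
  + by apply: cvg_at_left_filter; apply: continuous_horner.
- by move=> x _; rewrite -derivE P'E.
Qed.

Lemma integral_event_le (D : set R) (E : R -> bool) (al be : R) : al <= be ->
  (forall y, D y -> E y -> al <= y <= be) ->
  (\int[mu]_(y in D) (E y)%:R%:E <= (be - al)%:E)%E.
Proof.
move=> ab DE; rewrite -(@integral1_itv true false _ _ ab).
apply: ge0_le_integral_patch => y; rewrite !patchE.
  by case: ifP => // _; case: (E y).
case: (boolP (y \in D)) => [/set_mem Dy|_]; last by case: ifP.
case: (boolP (E y)) => [Ey|_]; last by case: ifP.
by rewrite mem_setE in_itv /= (DE y Dy Ey).
Qed.

Lemma integral_event_ge (D : set R) (E : R -> bool) (al be : R) : al <= be ->
  (forall y, al <= y < be -> D y /\ E y) ->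
  ((be - al)%:E <= \int[mu]_(y in D) (E y)%:R%:E)%E.
Proof.
move=> ab DE; rewrite -(@integral1_itv true true _ _ ab).
apply: ge0_le_integral_patch => y; rewrite !patchE !mem_setE /= in_itv /=.
  by case: ifP.
case: ifP => [yab|_]; last by case: ifP => // _; case: (E y).
by have [Dy ->] := DE y yab; rewrite mem_set.
Qed.

Lemma integral_split_event_le (K x : R) (A B : bool) (E : R -> bool) : 0 <= x <= K ->
  (forall y, 0 <= y <= K -> E y -> (y < x) && A || (x <= y) && B) ->
  (\int[mu]_(y in `[0%R, K]) (E y)%:R%:E <= (x * A%:R + (K - x) * B%:R)%:E)%E.
Proof.
move=> /andP[x0 xK] ev.
have ev_itv al be : al <= be -> (forall y, 0 <= y <= K -> E y -> al <= y <= be) ->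
    (\int[mu]_(y in `[0%R, K]) (E y)%:R%:E <= (be - al)%:E)%E.
  by move=> ab H; apply: integral_event_le => // y; rewrite /= in_itv; exact: H.
case: A B ev => [] [] ev /=; rewrite ?mulr1 ?mulr0 ?addr0 ?add0r.
- have -> : x + (K - x) = K - 0 by ring.
  by apply: ev_itv => [|y yK _]; first exact: le_trans xK.
- rewrite -(subr0 x); apply: ev_itv => // y yK /(ev _ yK).
  by rewrite andbF orbF andbT => yx; case/andP: yK => -> _; rewrite ltW.
- apply: ev_itv => // y yK /(ev _ yK).
  by rewrite andbF andbT orFb => xy; case/andP: yK => _ ->; rewrite xy.
- have := ev_itv x x (lexx x); rewrite subrr; apply=> y yK /(ev _ yK).
  by rewrite !andbF.
Qed.

Lemma integral_mul_indic_le (D S A : set R) (f g : R -> R) :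
  (forall x, D x -> S x -> A x /\ 0 <= f x <= g x) -> (forall x, A x -> 0 <= g x) ->
  (\int[mu]_(x in D) (f x * \1_S x)%:E <= \int[mu]_(x in A) (g x)%:E)%E.
Proof.
move=> DSA g0; apply: ge0_le_integral_patch => x; rewrite !patchE indicE.
all: case: (boolP (x \in S)) => [/set_mem Sx|_]; rewrite ?mulr1 ?mulr0.
- by case: ifP => // /set_mem Dx; have [_ /andP[]] := DSA x Dx Sx.
- by case: ifP.
- case: ifP => [/set_mem Dx|_]; last by case: ifP => // /set_mem Ax; rewrite lee_fin g0.
  by have [Ax /andP[_ fg]] := DSA x Dx Sx; rewrite (mem_set Ax) lee_fin.
- by case: ifP => // _; case: ifP => // /set_mem Ax; rewrite lee_fin g0.
Qed.

End Integrals.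

Section ShapleyPayments.
Local Open Scope classical_set_scope.
Variable R : realType.
Local Notation mu := (@lebesgue_measure R).

Lemma shapley_pay_solo (h K s : R) :
  shapley_pay h K [:: s] 0 = if h <= K + s
    then fine (\int[mu]_(x in `[0%R, K]) (x < h <= x + s)%R%:R%:E) / K else 0.
Proof.
rewrite /shapley_pay /unif_prob /pool_stake big_seq1 expr1 /=.
by under eq_integral do rewrite big_mkcond big_ord1 /= add0r.
Qed.

(* x is the arrival time of the new identity, y that of the atomic member. *)
Lemma shapley_pay_pair (h K b s : R) :
  shapley_pay h K [:: b; s] 1 = if h <= K + (b + s) then
    fine (\int[mu]_(x in `[0%R, K]) \int[mu]_(y in `[0%R, K])
      (let pre := (if y < x then b else 0) in pre + x < h <= pre + x + s)%R%:R%:E) / K ^+ 2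
  else 0.
Proof.
rewrite /shapley_pay /unif_prob /pool_stake big_cons big_seq1 /=.
by under eq_integral do under eq_integral do
  rewrite !big_mkcond !big_ord_recl !big_ord0 /= !addr0.
Qed.

Lemma shapley_pay_solo_le (h K s al be : R) : 0 < K -> al <= be ->
  (forall x, 0 <= x <= K -> x < h <= x + s -> al <= x <= be) ->
  shapley_pay h K [:: s] 0 <= (be - al) / K.
Proof.
move=> K0 ab ev; rewrite shapley_pay_solo.
case: ifP => _; last by rewrite divr_ge0 ?subr_ge0 // ltW.
rewrite ler_pM2r ?invr_gt0 //; apply: fine_le_EFin.
  by apply: integral_ge0 => x _; case: (_ && _).
by apply: integral_event_le => // x; rewrite /= in_itv; exact: ev.
Qed.

Lemma shapley_pay_solo_ge (h K s al be : R) : 0 < K -> h <= K + s -> al <= be ->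
  (forall x, al <= x < be -> 0 <= x <= K /\ x < h <= x + s) ->
  (be - al) / K <= shapley_pay h K [:: s] 0.
Proof.
move=> K0 win ab ev; rewrite shapley_pay_solo win ler_pM2r ?invr_gt0 //.
apply: (@EFin_le_fine _ _ _ (K - 0)).
  by apply: integral_event_ge => // x /ev[xK ->].
apply: integral_event_le => [|x]; first exact: ltW.
by move=> + _; rewrite /= in_itv.
Qed.

(* The member arrives first with probability x / K, and the identity is then
   pivotal iff x is in the first interval; otherwise iff it is in the second. *)
Lemma pair_pivotal_integral_le (h K b s x : R) : 0 <= x <= K ->
  (\int[mu]_(y in `[0%R, K])
      (let pre := (if y < x then b else 0) in pre + x < h <= pre + x + s)%R%:R%:E
    <= (x * \1_`[h - b - s, h - b[ x + (K - x) * \1_`[h - s, h[ x)%:E)%E.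
Proof.
move=> xK; rewrite !indicE !mem_setE /= !in_itv /=.
apply: integral_split_event_le => // y _.
by case: (ltP y x) => _ /andP[? ?] /=; rewrite ?orbF; apply/andP; split; lra.
Qed.

Lemma integral_pair_pivotal_le (h K b s : R) : 0 < K -> b <= h -> 0 <= s ->
  (\int[mu]_(x in `[0%R, K])
      ((x * \1_`[h - b - s, h - b[ x)%:E + ((K - x) * \1_`[h - s, h[ x)%:E)
    <= (((h - b) ^+ 2 - Num.max 0 (h - s - b) ^+ 2 + Num.max 0 (s - h + K) ^+ 2) / 2)%:E)%E.
Proof.
move=> K0 bh s0.
set M1 := Num.max 0 (h - s - b); set M2 := Num.max 0 (s - h + K).
have M1_le : M1 <= h - b by rewrite ge_max subr_ge0 bh /=; lra.
have [M2_ge0 M2_ge] : 0 <= M2 /\ s - h + K <= M2 by rewrite !le_max !lexx ?orbT.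
have indic_ge0 (S : set R) x : 0 <= \1_S x by rewrite indicE ler0n.
rewrite ge0_integralD //; first last.
- apply/measurable_realfun.measurable_EFinP/measurable_realfun.measurable_funM.
    by apply: measurable_realfun.measurable_funB; [exact: measurable_cst|exact: measurable_id].
  by apply: measurable_realfun.measurable_indic; exact: measurable_itv.
- by move=> x /=; rewrite in_itv /= => /andP[_ xK]; rewrite lee_fin mulr_ge0 ?subr_ge0.
- apply/measurable_realfun.measurable_EFinP/measurable_realfun.measurable_funM.
    exact: measurable_id.
  by apply: measurable_realfun.measurable_indic; exact: measurable_itv.
- by move=> x /=; rewrite in_itv /= => /andP[x0 _]; rewrite lee_fin mulr_ge0.
have I1 : (\int[mu]_(x in `[0%R, K]) (x * \1_`[h - b - s, h - b[ x)%:E <=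
    (1 * ((h - b) ^+ 2 - M1 ^+ 2) / 2 + 0 * (h - b - M1))%:E)%E.
  rewrite -integral_itv_affine //; apply: integral_mul_indic_le => x /=; rewrite !in_itv /=.
    move=> /andP[x0 xK] /andP[e1 e2]; rewrite /M1 ge_max x0 /=.
    by split; [apply/andP; split|]; lra.
  by rewrite /M1 ge_max => /andP[/andP[x0 _] _]; rewrite mul1r addr0.
have I2 : (\int[mu]_(x in `[0%R, K]) ((K - x) * \1_`[h - s, h[ x)%:E <=
    (-1 * (K ^+ 2 - (K - M2) ^+ 2) / 2 + K * (K - (K - M2)))%:E)%E.
  rewrite -integral_itv_affine ?gerBl //; apply: integral_mul_indic_le => x /=; rewrite !in_itv /=.
    by move=> /andP[x0 xK] /andP[e1 e2]; split; apply/andP; split; lra.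
  by case/andP; lra.
by apply: le_trans (leeD I1 I2) _; rewrite -EFinD lee_fin; lra.
Qed.

Lemma shapley_pay_pair_le (h K b s : R) : 0 < K -> b <= h -> 0 <= s ->
  shapley_pay h K [:: b; s] 1 <= pair_share h K b s.
Proof.
move=> K0 bh s0; have bound := integral_pair_pivotal_le K0 bh s0.
rewrite shapley_pay_pair /pair_share; set V := (_ - _ + _).
have V_ge0 : 0 <= V / 2.
  rewrite -lee_fin; apply: le_trans bound; apply: integral_ge0 => x /=.
  by rewrite in_itv /= => /andP[x0 xK]; rewrite adde_ge0 // lee_fin mulr_ge0 ?subr_ge0 // indicE.
case: ifP => _; last by rewrite invfM mulrA mulr_ge0 // invr_ge0 exprn_ge0 // ltW.
rewrite [in V / _]invfM mulrA ler_pM2r ?invr_gt0 ?exprn_gt0 //; apply: fine_le_EFin.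
  by apply: integral_ge0 => x _; apply: integral_ge0 => y _; case: (_ && _).
apply: le_trans bound; apply: ge0_le_integral_patch => x; rewrite !patchE.
  by case: ifP => // _; apply: integral_ge0 => y _; case: (_ && _).
case: ifP => // /set_mem; rewrite /= in_itv /= => xK.
by rewrite -EFinD; exact: pair_pivotal_integral_le.
Qed.

End ShapleyPayments.

Section SybilProof.
Variables (R : realType) (n : nat) (h l : R) (a k : 'I_n -> R).
Hypothesis a_pos : forall i, 0 < a i.
Hypothesis a_lt_h : forall i, a i < h.
Hypothesis k_pos : forall i, 0 < k i.
Hypothesis k_le_h : forall i, k i <= h.
Hypothesis ak_win : forall i, h <= a i + k i.
Hypothesis l_ge_h : h <= l.
Hypothesis cond1 : forall i, (h - a i) / k i ^+ 2 = 1 / l.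
Hypothesis cond2 : forall i, a i / l <= (k i + a i - h) / k i.
Hypothesis cond3 : forall i j, i != j ->
  pair_share h (k j) (a j) (a i) <= (k i + a i - h) / k i.

Variable i : 'I_n.
Local Notation own_share := ((k i + a i - h) / k i).
Local Notation rate := (own_share / a i).

Lemma own_share_le_payoff_Pi : own_share <= payoff_Pi h a k i.
Proof.
have Kh := k_le_h i; have ah := a_lt_h i; have win := ak_win i.
rewrite /payoff_Pi (_ : k i + a i - h = k i - (h - a i)); last by ring.
apply: shapley_pay_solo_ge => //; first by rewrite addrC.
  by rewrite lerBlDr addrC.
by move=> x /andP[x1 x2]; split; apply/andP; split; lra.
Qed.

Lemma rate_mul_stake : rate * a i = own_share.
Proof. by rewrite divfK ?gt_eqF. Qed.

Lemma inv_l_le_rate : 1 / l <= rate.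
Proof. by rewrite ler_pdivlMr // mul1r mulrC. Qed.

Lemma own_pool_pay_le x : 0 <= x <= a i ->
  shapley_pay h (k i) [:: x] 0 <= rate * x.
Proof.
move=> xa; have K0 := k_pos i; have Kh := k_le_h i; have win := ak_win i.
set M := Num.max 0 (x - (h - k i)).
have [M_ge0 M_ge] : 0 <= M /\ x - (h - k i) <= M by rewrite !le_max !lexx ?orbT.
apply: le_trans (@shapley_pay_solo_le _ h (k i) x (k i - M) (k i) _ _ _) _ => //.
- by rewrite gerBl.
- by move=> y /andP[_ ->] /andP[yh hy]; rewrite andbT; lra.
rewrite (_ : k i - (k i - M) = M); last by ring.
rewrite (_ : rate * x = ((a i - (h - k i)) / a i * x) / k i); last first.
  by field; rewrite !gt_eqF.
rewrite ler_pM2r ?invr_gt0 //; apply: max0_sub_le_chord => //; lra.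
Qed.

Lemma other_pool_pay_le j x : j != i -> 0 <= x <= a i ->
  shapley_pay h (k j) [:: a j; x] 1 <= rate * x.
Proof.
move=> ji /andP[x0 xa].
apply: le_trans (shapley_pay_pair_le _ _ _) _ => //; first exact: ltW.
apply: (pair_share_le_linear (a := a i)) => //; first exact: ltW.
- by rewrite cond1 inv_l_le_rate.
- by rewrite x0 xa.
- by rewrite rate_mul_stake cond3 // eq_sym.
Qed.

Lemma nonatomic_pool_pay_le x : 0 <= x -> shapley_pay h l [:: x] 0 <= rate * x.
Proof.
move=> x0; have l0 : 0 < l := lt_le_trans (lt_trans (a_pos i) (a_lt_h i)) l_ge_h.
apply: le_trans (@shapley_pay_solo_le _ h l x (h - x) h _ _ _) _ => //.
- by rewrite gerBl.
- by move=> y _ /andP[yh hy]; apply/andP; split; lra.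
rewrite opprB addrC subrK mulrC ler_wpM2r //.
by have := inv_l_le_rate; rewrite mul1r.
Qed.

Lemma sybil_payoff_le_own_share m (J : {set 'I_n + 'I_m}) (s : 'I_n + 'I_m -> R) :
  (forall p, p \in J -> 0 <= s p) -> \sum_(p in J) s p = a i ->
  sybil_payoff h l a k i J s <= own_share.
Proof.
move=> s0 s_sum.
have s_le p : p \in J -> s p <= a i.
  move=> pJ; rewrite -s_sum (bigD1 p) //= lerDl.
  by apply: sumr_ge0 => q /andP[qJ _]; exact: s0.
apply: (@le_trans _ _ (rate * \sum_(p in J) s p)); last by rewrite s_sum rate_mul_stake.
rewrite mulr_sumr; apply: ler_sum => -[j|q] pJ.
- have sa : 0 <= s (inl j) <= a i by rewrite s0 // s_le.
  by case: eqVneq sa => [-> sa|ji sa]; [exact: own_pool_pay_le | exact: other_pool_pay_le].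
- exact/nonatomic_pool_pay_le/s0.
Qed.

End SybilProof.

Theorem theorem5p1 (R : realType) (n m : nat) (h l : R) (a k : 'I_n -> R)
  (h_pos : 0 < h)
  (a_pos : forall i, 0 < a i) (a_lt_h : forall i, a i < h)
  (k_pos : forall i, 0 < k i) (k_le_h : forall i, k i <= h)
  (ak_win : forall i, h <= a i + k i)
  (l_ge_h : h <= l) (m_pos : (0 < m)%N)
  (cond1 : forall i, (h - a i) / (k i ^+ 2) = 1 / l)
  (cond2 : forall i, a i / l <= (k i + a i - h) / k i)
  (cond3 : forall i j, i != j ->
     ((h - a j) ^+ 2 - (Num.max 0 (h - a i - a j)) ^+ 2
        + (Num.max 0 (a i - h + k j)) ^+ 2) / (2 * k j ^+ 2)
       <= (k i + a i - h) / k i) :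
  forall (i : 'I_n) (J : {set 'I_n + 'I_m}) (s : 'I_n + 'I_m -> R),
    (forall p, p \in J -> 0 <= s p) ->
    \sum_(p in J) s p = a i ->
    sybil_payoff h l a k i J s <= payoff_Pi h a k i.
Proof.
move=> i J s s0 s_sum.
have sybil_le := sybil_payoff_le_own_share a_pos a_lt_h k_pos k_le_h ak_win l_ge_h
  cond1 cond2 cond3 s0 s_sum.
exact: le_trans sybil_le (own_share_le_payoff_Pi a_lt_h k_pos k_le_h ak_win i).
Qed.
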